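(* Assume the vector variational inequality defined by $F$ and $K$ is monotone. (a) If the proper Pareto solution set $\mathrm{Sol}^{pr}(F,K)$ is disconnected, then each connected component of $\mathrm{Sol}^{pr}(F,K)$ is unbounded. (b) If $\mathrm{Sol}^{pr}(F,K)$ is bounded and nonempty, then it is connected.
   Context: Let $K\subset\mathbb{R}^n$ be a nonempty closed convex set and $F_1,\dots,F_m:K\to\mathbb{R}^n$ continuous functions. The problem is monotone if each $F_l$ is monotone on $K$: $\langle F_l(y)-F_l(x),y-x\rangle\ge0$ for all $x,y\in K$. Let $\Delta=\{\xi\in\mathbb{R}^m_+:\sum_l\xi_l=1\}$, $\operatorname{ri}\Delta=\{\xi\in\Delta:\xi_l>0,\ l=1,\dots,m\}$ and $F_\xi=\sum_l\xi_lF_l$. For $G:K\to\mathbb{R}^n$, $\mathrm{Sol}(G,K)=\{x\in K:\langle G(x),y-x\rangle\ge0\ \forall y\in K\}$. The proper Pareto solution set is $\mathrm{Sol}^{pr}(F,K)=\bigcup_{\xi\in\operatorname{ri}\Delta}\mathrm{Sol}(F_\xi,K)$. *)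

From mathcomp Require Import all_boot.
From Stdlib Require Import Reals.

Set Implicit Arguments.
Unset Strict Implicit.
Unset Printing Implicit Defensive.

Local Open Scope R_scope.

Definition vec (n : nat) := 'I_n -> R.

Definition vadd n (x y : vec n) : vec n := fun i => x i + y i.
Definition vsub n (x y : vec n) : vec n := fun i => x i - y i.
Definition vscale n (t : R) (x : vec n) : vec n := fun i => t * x i.

Definition inner n (x y : vec n) : R := \big[Rplus/0]_(i < n) (x i * y i).
Definition vnorm n (x : vec n) : R := sqrt (inner x x).
Definition vdist n (x y : vec n) : R := vnorm (vsub x y).

Definition nonempty n (S : vec n -> Prop) : Prop := exists x, S x.
Definition subset n (A B : vec n -> Prop) : Prop := forall x, A x -> B x.

Definition is_open n (U : vec n -> Prop) : Prop :=
  forall x, U x -> exists eps, 0 < eps /\ forall y, vdist x y < eps -> U y.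

Definition is_closed n (K : vec n -> Prop) : Prop :=
  forall x, (forall eps, 0 < eps -> exists y, K y /\ vdist x y < eps) -> K x.

Definition is_convex n (K : vec n -> Prop) : Prop :=
  forall x y t, K x -> K y -> 0 <= t <= 1 ->
    K (vadd (vscale t x) (vscale (1 - t) y)).

Definition vbounded n (S : vec n -> Prop) : Prop :=
  exists M, forall x, S x -> vnorm x <= M.

Definition connected n (S : vec n -> Prop) : Prop :=
  ~ exists U V : vec n -> Prop,
      is_open U /\ is_open V /\
      (forall x, S x -> U x \/ V x) /\
      (exists x, S x /\ U x) /\ (exists x, S x /\ V x) /\
      (forall x, S x -> U x -> V x -> False).

Definition conn_component n (C S : vec n -> Prop) : Prop :=
  nonempty C /\ subset C S /\ connected C /\
  forall D, subset D S -> connected D -> (exists x, C x /\ D x) -> subset D C.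

Definition continuous_on n (K : vec n -> Prop) (G : vec n -> vec n) : Prop :=
  forall x, K x -> forall eps, 0 < eps ->
    exists delta, 0 < delta /\
      forall y, K y -> vdist x y < delta -> vdist (G x) (G y) < eps.

Definition monotone_on n (K : vec n -> Prop) (G : vec n -> vec n) : Prop :=
  forall x y, K x -> K y -> 0 <= inner (vsub (G y) (G x)) (vsub y x).

Definition monotone_VVI n m (K : vec n -> Prop) (F : 'I_m -> vec n -> vec n) :=
  forall l, monotone_on K (F l).

Definition ri_simplex m (xi : 'I_m -> R) : Prop :=
  (forall l, 0 < xi l) /\ \big[Rplus/0]_(l < m) xi l = 1.

Definition Fxi n m (F : 'I_m -> vec n -> vec n) (xi : 'I_m -> R) : vec n -> vec n :=
  fun x i => \big[Rplus/0]_(l < m) (xi l * F l x i).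

Definition Sol n (G : vec n -> vec n) (K : vec n -> Prop) : vec n -> Prop :=
  fun x => K x /\ forall y, K y -> 0 <= inner (G x) (vsub y x).

Definition SolPr n m (F : 'I_m -> vec n -> vec n) (K : vec n -> Prop) : vec n -> Prop :=
  fun x => exists xi, ri_simplex xi /\ Sol (Fxi F xi) K x.

(* For weights xi in the relative interior of the simplex, F_xi is monotone and
   continuous, so Sol(F_xi, K) is convex by Minty's lemma, hence connected, and it lies inside a
   single connected component of Sol^pr(F, K).  Let C be a bounded component, with
   Sol(F_xi0, K) meeting C, and let xi1 be arbitrary.  Along the segment xi_t from xi0 to xi1,
   the set of t such that Sol(F_xi_t, K) meets C is closed (boundedness of C, closed graph of
   the solution map) and open: near t, the problem truncated to K cut by a large ball has
   solutions (Hartman-Stampacchia, obtained here from a minimax lemma for dissipative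
   matrices), they stay inside the ball, so they solve the full problem, and the union of the
   solution sets over a small parameter interval is connected.  Hence C = Sol^pr(F, K), which
   gives (a); (b) follows by applying (a) to the component of any solution. *)

From Pilot Require Import Defs.
From HB Require Import structures.
From mathcomp Require Import all_boot.
From Stdlib Require Import Reals Lra Lia Classical ClassicalEpsilon FunctionalExtensionality.
From mathcomp Require Import zify.

Set Implicit Arguments.
Unset Strict Implicit.
Unset Printing Implicit Defensive.
Local Open Scope R_scope.

HB.instance Definition _ := Monoid.isComLaw.Build R 0 Rplus
  (fun x y z => esym (Rplus_assoc x y z)) Rplus_comm Rplus_0_l.
HB.instance Definition _ := Monoid.isComLaw.Build R 1 Rmult
  (fun x y z => esym (Rmult_assoc x y z)) Rmult_comm Rmult_1_l.
HB.instance Definition _ := Monoid.isMulLaw.Build R 0 Rmult Rmult_0_l Rmult_0_r.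
HB.instance Definition _ :=
  Monoid.isAddLaw.Build R Rmult Rplus Rmult_plus_distr_r Rmult_plus_distr_l.

Lemma big_Rle I (r : seq I) (P : pred I) (f g : I -> R) :
  (forall i, P i -> f i <= g i) ->
  \big[Rplus/0]_(i <- r | P i) f i <= \big[Rplus/0]_(i <- r | P i) g i.
Proof. by move=> fg; apply: (big_ind2 (fun a b => a <= b)) => // *; lra. Qed.

Lemma big_Rge0 I (r : seq I) (P : pred I) (f : I -> R) :
  (forall i, P i -> 0 <= f i) -> 0 <= \big[Rplus/0]_(i <- r | P i) f i.
Proof. by move=> f0; apply: (big_ind (fun a => 0 <= a)) => // *; lra. Qed.

Lemma big_Rle0 I (r : seq I) (P : pred I) (f : I -> R) :
  (forall i, P i -> f i <= 0) -> \big[Rplus/0]_(i <- r | P i) f i <= 0.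
Proof. by move=> f0; apply: (big_ind (fun a => a <= 0)) => // *; lra. Qed.

Lemma big_Rle_sum k (f : 'I_k -> R) j :
  (forall i, 0 <= f i) -> f j <= \big[Rplus/0]_(i < k) f i.
Proof.
move=> f0; rewrite (bigD1 j) //=.
by rewrite -{1}[f j]Rplus_0_r; apply/Rplus_le_compat_l/big_Rge0.
Qed.

Lemma big_Rlin k (f g : 'I_k -> R) a b :
  \big[Rplus/0]_(i < k) (a * f i + b * g i) =
  a * \big[Rplus/0]_(i < k) f i + b * \big[Rplus/0]_(i < k) g i.
Proof. by rewrite big_split /= !big_distrr. Qed.

Lemma big_Rge0_eq0 I (r : seq I) (w c : I -> R) : (forall j, 0 <= w j) ->
  \big[Rplus/0]_(j <- r) w j = 0 -> \big[Rplus/0]_(j <- r) (w j * c j) = 0.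
Proof.
move=> w0; elim: r => [|a r IH]; rewrite ?big_nil // !big_cons => sum0.
have wa0 := w0 a; have := @big_Rge0 _ r (fun _ => true) _ (fun j _ => w0 j) => r0.
by rewrite IH; [have -> : w a = 0 by lra|]; lra.
Qed.

Lemma inv_succ_gt0 k : 0 < / INR k.+1.
Proof. by apply: Rinv_0_lt_compat; apply: lt_0_INR; lia. Qed.

Lemma inv_succ_le1 k : / INR k.+1 <= 1.
Proof.
rewrite -Rinv_1; apply: Rinv_le_contravar; first lra.
by rewrite S_INR; have := pos_INR k; lra.
Qed.

Lemma inv_succ_antimonotone k l : (k <= l)%nat -> / INR l.+1 <= / INR k.+1.
Proof. by move=> kl; apply: Rinv_le_contravar; [apply: lt_0_INR|apply: le_INR]; lia. Qed.

Lemma cv_inv_succ_bound (u : nat -> R) l :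
  (forall k, Rabs (u k - l) <= / INR k.+1) -> Un_cv u l.
Proof.
move=> ul e e0; have [N [Ne N0]] := archimed_cor1 e e0.
exists N => k kN; apply: Rle_lt_trans (ul k) _; apply: Rle_lt_trans Ne.
by apply: Rinv_le_contravar; [apply: lt_0_INR|apply: le_INR]; lia.
Qed.

Lemma cv_inv_succ : Un_cv (fun k => / INR k.+1) 0.
Proof.
apply: cv_inv_succ_bound => k; rewrite Rminus_0_r Rabs_pos_eq; first lra.
exact/Rlt_le/inv_succ_gt0.
Qed.

Lemma cv_const c : Un_cv (fun _ => c) c.
Proof. by move=> e e0; exists 0%nat => k _; rewrite /Rdist Rminus_diag Rabs_R0. Qed.

Lemma cv_big I (r : seq I) (P : pred I) (f : nat -> I -> R) (l : I -> R) :
  (forall i, P i -> Un_cv (fun k => f k i) (l i)) ->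
  Un_cv (fun k => \big[Rplus/0]_(i <- r | P i) f k i) (\big[Rplus/0]_(i <- r | P i) l i).
Proof.
move=> fl; elim: r => [|a r IH].
  rewrite big_nil; move=> e e0; exists 0%nat => k _.
  by rewrite big_nil /Rdist Rminus_0_r Rabs_R0.
move=> e e0; rewrite big_cons.
case Pa: (P a); last by have [N HN] := IH e e0; exists N => k kN; rewrite big_cons Pa; apply: HN.
have [N HN] := CV_plus _ _ _ _ (fl a Pa) IH e e0.
by exists N => k kN; rewrite big_cons Pa; apply: HN.
Qed.

Lemma cv_ub (u : nat -> R) l c : (forall k, u k <= c) -> Un_cv u l -> l <= c.
Proof. by move=> uc ul; apply: (Rle_cv_lim uc ul (cv_const c)). Qed.

Lemma cv_lb (u : nat -> R) l c : (forall k, c <= u k) -> Un_cv u l -> c <= l.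
Proof. by move=> cu ul; apply: (Rle_cv_lim cu (cv_const c) ul). Qed.

Lemma cv_in_interval (u : nat -> R) l a b :
  (forall k, a <= u k <= b) -> Un_cv u l -> a <= l <= b.
Proof.
move=> uab ul; split; [apply: (cv_lb (u := u)) | apply: (cv_ub (u := u))] => // k;
  by have := uab k; lra.
Qed.

Lemma lub_approx (E : R -> Prop) s : is_lub E s ->
  forall N, exists t, E t /\ s - / INR N.+1 < t.
Proof.
move=> [_ s_least] N; apply: NNPP => noE.
have : s <= s - / INR N.+1.
  by apply: s_least => t Et; apply: Rnot_lt_le => lt; apply: noE; exists t.
by have := inv_succ_gt0 N; lra.
Qed.

Definition strict_incr (phi : nat -> nat) := forall k, (phi k < phi k.+1)%nat.

Lemma strict_incr_ge phi : strict_incr phi -> forall k, (k <= phi k)%nat.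
Proof. by move=> phi_incr; elim=> [|k IH]; [lia | have := phi_incr k; lia]. Qed.

Lemma strict_incr_comp phi psi :
  strict_incr phi -> strict_incr psi -> strict_incr (fun k => phi (psi k)).
Proof. by move=> phi_incr psi_incr k; apply: (homo_ltn ltn_trans phi_incr). Qed.

Lemma cv_subseq u l phi : strict_incr phi -> Un_cv u l -> Un_cv (fun k => u (phi k)) l.
Proof.
move=> phi_incr ul e e0; have [N HN] := ul e e0.
by exists N => k kN; apply: HN; have := strict_incr_ge phi_incr k; lia.
Qed.

Lemma bounded_cv_subseq (u : nat -> R) M : (forall k, Rabs (u k) <= M) ->
  exists phi l, strict_incr phi /\ Un_cv (fun k => u (phi k)) l.
Proof.
move=> uM.
have [l l_acc] := @Bolzano_Weierstrass u (fun c => -M <= c <= M) (compact_P3 (-M) M)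
  (fun k => ltac:(have := uM k; split_Rabs; lra)).
have near_l : forall Nk : nat * nat,
    exists j, (Nk.1 <= j)%nat /\ Rabs (u j - l) < / INR Nk.2.+1.
  move=> [N k]; have e0 := inv_succ_gt0 k.
  have [j [jN ujl]] := l_acc (disc l (mkposreal _ e0)) N
     (ex_intro _ (mkposreal _ e0) (fun y h => h)).
  by exists j; split; [simpl; lia | exact: ujl].
have [g Hg] := choice _ near_l.
pose fix phi k := match k with 0 => g (0, 0)%nat | k'.+1 => g ((phi k').+1, k'.+1) end.
exists phi, l; split.
  by move=> k /=; have [+ _] := Hg ((phi k).+1, k.+1) => /=; lia.
apply: cv_inv_succ_bound => -[|k] /=.
  by have [_ /= ?] := Hg (0, 0)%nat; lra.
by have [_ /= ?] := Hg ((phi k).+1, k.+1); lra.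
Qed.

Definition sqnorm p (x : vec p) := inner x x.

Definition vcv p (u : nat -> vec p) (x : vec p) := forall i, Un_cv (fun k => u k i) (x i).

Definition seq_closed p (S : vec p -> Prop) :=
  forall u x, (forall k, S (u k)) -> vcv u x -> S x.

Definition seq_continuous_on p (S : vec p -> Prop) (G : vec p -> vec p) :=
  forall u x, S x -> (forall k, S (u k)) -> vcv u x -> vcv (fun k => G (u k)) (G x).

Lemma sqnorm_ge0 p (x : vec p) : 0 <= sqnorm x.
Proof. by apply: big_Rge0 => i _; nra. Qed.

Lemma sqr_coord_le_sqnorm p (x : vec p) i : x i * x i <= sqnorm x.
Proof. by apply: (@big_Rle_sum p (fun i => x i * x i)) => j; nra. Qed.

Lemma Rabs_coord_le_vnorm p (x : vec p) i : Rabs (x i) <= vnorm x.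
Proof. by rewrite /vnorm -sqrt_Rsqr_abs; apply/sqrt_le_1_alt/sqr_coord_le_sqnorm. Qed.

Lemma Rabs_coord_le_vdist p (x y : vec p) i : Rabs (x i - y i) <= vdist x y.
Proof. exact: (Rabs_coord_le_vnorm (vsub x y) i). Qed.

Lemma vnorm_le_sqnorm p (x : vec p) M : vnorm x <= M -> sqnorm x <= M * M.
Proof.
rewrite /vnorm /sqnorm => xM; have s0 := sqrt_pos (inner x x).
by rewrite -(sqrt_sqrt (inner x x)); [nra | exact: sqnorm_ge0].
Qed.

Lemma Rabs_coord_le_of_sqnorm p (x : vec p) r i : 0 <= r -> sqnorm x <= r * r -> Rabs (x i) <= r.
Proof. by move=> r0 xr; have := sqr_coord_le_sqnorm x i => xi; apply: Rabs_le; nra. Qed.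

Lemma vcv_vdist p (u : nat -> vec p) x : vcv u x ->
  forall eps, 0 < eps -> exists N, forall k, (N <= k)%nat -> vdist x (u k) < eps.
Proof.
move=> ux e e0; have sqr_cv : Un_cv (fun k => sqnorm (vsub x (u k))) 0.
  suff : Un_cv (fun k => sqnorm (vsub x (u k)))
      (\big[Rplus/0]_(i < p) ((x i - x i) * (x i - x i))).
    by rewrite big1 // => i _; ring.
  by apply: cv_big => i _; apply: CV_mult; apply: CV_minus => //; exact: cv_const.
have [N HN] := sqr_cv (e * e) ltac:(nra).
exists N => k kN; have := HN k ltac:(rewrite /ge; lia).
rewrite /Rdist Rminus_0_r Rabs_pos_eq; last exact: sqnorm_ge0.
move=> small.
rewrite /vdist /vnorm -(sqrt_square e); last lra.
by apply: sqrt_lt_1_alt; split; [apply: sqnorm_ge0 | exact: small].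
Qed.

Lemma vcv_open p (U : vec p -> Prop) u x : is_open U -> U x -> vcv u x ->
  exists N, forall k, (N <= k)%nat -> U (u k).
Proof.
move=> U_open Ux ux; have [e [e0 ballU]] := U_open x Ux.
by have [N HN] := vcv_vdist ux e0; exists N => k kN; exact/ballU/HN.
Qed.

Lemma closed_seq_closed p (S : vec p -> Prop) : is_closed S -> seq_closed S.
Proof.
move=> S_closed u x Su ux; apply: S_closed => e e0.
by have [N HN] := vcv_vdist ux e0; exists (u N); split; [|exact: HN].
Qed.

Lemma vcv_subseq p (u : nat -> vec p) x phi :
  strict_incr phi -> vcv u x -> vcv (fun k => u (phi k)) x.
Proof. by move=> phi_incr ux i; exact: (cv_subseq phi_incr (ux i)). Qed.

Lemma vcv_const p (x : vec p) : vcv (fun _ => x) x.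
Proof. by move=> i; exact: cv_const. Qed.

Lemma vcv_vsub p (a b : nat -> vec p) x y : vcv a x -> vcv b y ->
  vcv (fun k => vsub (a k) (b k)) (vsub x y).
Proof. by move=> ax yb i; exact: CV_minus. Qed.

Lemma vcv_inner p (a b : nat -> vec p) x y : vcv a x -> vcv b y ->
  Un_cv (fun k => inner (a k) (b k)) (inner x y).
Proof. by move=> ax by_; apply: cv_big => i _; exact: CV_mult. Qed.

Lemma vcv_sqnorm p (a : nat -> vec p) x : vcv a x -> Un_cv (fun k => sqnorm (a k)) (sqnorm x).
Proof. by move=> ax; exact: vcv_inner. Qed.

Lemma bounded_vcv_subseq p (u : nat -> vec p) M : (forall k i, Rabs (u k i) <= M) ->
  exists phi x, strict_incr phi /\ vcv (fun k => u (phi k)) x.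
Proof.
move=> uM.
suff /(_ (enum 'I_p)) [phi [x [phi_incr ux]]] : forall s : seq 'I_p,
    exists phi x, strict_incr phi /\ forall i, i \in s -> Un_cv (fun k => u (phi k) i) (x i).
  by exists phi, x; split => // i; apply: ux; rewrite mem_enum.
elim=> [|a s [phi [x [phi_incr ux]]]].
  by exists (fun k : nat => k), (fun _ => 0); split => // k /=.
have [psi [l [psi_incr ul]]] := bounded_cv_subseq (fun k => uM (phi k) a).
exists (fun k => phi (psi k)), (fun i => if i == a then l else x i); split.
  exact: strict_incr_comp.
move=> i; rewrite in_cons; case: eqP => [-> _|_ /= i_s] //.
exact: (cv_subseq psi_incr (ux i i_s)).
Qed.

Lemma continuous_on_seq p (S : vec p -> Prop) (G : vec p -> vec p) :
  continuous_on S G -> seq_continuous_on S G.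
Proof.
move=> G_cont u x Sx Su ux i e e0; have [d [d0 Gd]] := G_cont x Sx e e0.
have [N HN] := vcv_vdist ux d0; exists N => k kN.
rewrite /Rdist Rabs_minus_sym; apply: Rle_lt_trans (Rabs_coord_le_vdist _ _ i) _.
by apply: Gd => //; apply: HN; rewrite /ge in kN; lia.
Qed.

Lemma inner_sym p (x y : vec p) : inner x y = inner y x.
Proof. by apply: eq_bigr => i _; ring. Qed.

Lemma inner_linr p (x y z : vec p) a b :
  inner x (fun i => a * y i + b * z i) = a * inner x y + b * inner x z.
Proof. by rewrite -big_Rlin; apply: eq_bigr => i _; ring. Qed.

Lemma inner_subr p (x y z : vec p) : inner x (vsub y z) = inner x y - inner x z.
Proof.
have -> : vsub y z = fun i => 1 * y i + (-1) * z i.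
  by apply: functional_extensionality => i; rewrite /vsub; ring.
by rewrite inner_linr; ring.
Qed.

Lemma inner_subl p (x y z : vec p) : inner (vsub y z) x = inner y x - inner z x.
Proof. by rewrite inner_sym inner_subr (inner_sym x y) (inner_sym x z). Qed.

Lemma sqnorm_add_scale p (z w : vec p) t :
  sqnorm (fun i => z i + t * w i) = sqnorm z + 2 * t * inner z w + t * t * sqnorm w.
Proof.
rewrite /sqnorm /inner !big_distrr -!big_split /=.
by apply: eq_bigr => i _; ring.
Qed.

Definition vcomb p t (x y : vec p) : vec p := vadd (vscale t x) (vscale (1 - t) y).

Lemma vcomb_0 p (x y : vec p) : vcomb 0 x y = y.
Proof. by apply: functional_extensionality => i; rewrite /vcomb /vadd /vscale; ring. Qed.

Lemma vcomb_1 p (x y : vec p) : vcomb 1 x y = x.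
Proof. by apply: functional_extensionality => i; rewrite /vcomb /vadd /vscale; ring. Qed.

Lemma inner_vcomb p (z x y : vec p) t :
  inner z (vcomb t x y) = t * inner z x + (1 - t) * inner z y.
Proof. exact: inner_linr. Qed.

Lemma inner_vcomb_sub p (z x y : vec p) t :
  inner z (vsub (vcomb t x y) y) = t * inner z (vsub x y).
Proof. by rewrite !inner_subr inner_vcomb; ring. Qed.

Lemma vcv_vcomb p (ts : nat -> R) t (x y : vec p) : Un_cv ts t ->
  vcv (fun k => vcomb (ts k) x y) (vcomb t x y).
Proof.
move=> tst i; rewrite /vcomb /vadd /vscale.
by apply: CV_plus; apply: CV_mult => //; try apply: CV_minus => //; exact: cv_const.
Qed.

Lemma sqnorm_vcomb_le p t (x y : vec p) : 0 <= t <= 1 ->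
  sqnorm (vcomb t x y) <= t * sqnorm x + (1 - t) * sqnorm y.
Proof.
move=> t01; rewrite /sqnorm /inner -big_Rlin; apply: big_Rle => i _.
rewrite /vcomb /vadd /vscale; have := Rle_0_sqr (x i - y i); rewrite /Rsqr => sq0.
have : 0 <= t * (1 - t) by nra.
nra.
Qed.

Lemma convex_big_comb p (S : vec p -> Prop) I (r : seq I) (w : I -> R) (y : I -> vec p) :
  is_convex S -> (forall j, 0 <= w j) -> \big[Rplus/0]_(j <- r) w j = 1 ->
  (forall j, S (y j)) -> S (fun i => \big[Rplus/0]_(j <- r) (w j * y j i)).
Proof.
move=> S_convex; elim: r w => [|a r IH] w w0; first by rewrite big_nil => ?; lra.
rewrite big_cons => sum1 Sy.
set s := \big[Rplus/0]_(j <- r) w j in sum1.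
have s0 : 0 <= s by apply: big_Rge0 => j _; exact: w0.
have wa0 := w0 a.
have [s_eq0 | s_gt0] : s = 0 \/ 0 < s by lra.
  have -> : (fun i => \big[Rplus/0]_(j <- a :: r) (w j * y j i)) = y a.
    apply: functional_extensionality => i; rewrite big_cons big_Rge0_eq0 //.
    have -> : w a = 1 by lra.
    ring.
  exact: Sy.
have sum_ws : \big[Rplus/0]_(j <- r) (w j / s) = 1.
  by rewrite /Rdiv -big_distrl /= -/s; field; lra.
have ws0 j : 0 <= w j / s by apply: Rmult_le_pos => //; apply/Rlt_le/Rinv_0_lt_compat.
have := S_convex _ _ (w a) (Sy a) (IH _ ws0 sum_ws Sy) ltac:(lra).
congr S; apply: functional_extensionality => i.
rewrite /vadd /vscale big_cons; congr (_ + _).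
have -> : 1 - w a = s by lra.
by rewrite big_distrr /=; apply: eq_bigr => j _; field; lra.
Qed.

(** Connectedness *)

Definition separates n (S U V : vec n -> Prop) :=
  is_open U /\ is_open V /\ (forall x, S x -> U x \/ V x) /\
  (exists x, S x /\ U x) /\ (exists x, S x /\ V x) /\
  (forall x, S x -> U x -> V x -> False).

Lemma separates_sym n (S U V : vec n -> Prop) : separates S U V -> separates S V U.
Proof.
move=> [oU [oV [cov [SU [SV dis]]]]]; do 2 (split => //); split.
  by move=> x /cov [] ?; [right|left].
by do 2 (split => //); move=> x Sx Vx Ux; exact: dis Sx Ux Vx.
Qed.

Lemma separates_wlog n (S U V : vec n -> Prop) x : separates S U V -> S x ->
  (forall U' V', separates S U' V' -> U' x -> False) -> False.
Proof.
move=> sep Sx side; have [_ [_ [cov _]]] := sep.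
by case: (cov x Sx) => ?; [exact: side sep _ | exact: side _ _ (separates_sym sep) _].
Qed.

Lemma connected_in_side n (S D U V : vec n -> Prop) :
  connected D -> Defs.subset D S -> separates S U V ->
  (exists x, D x /\ U x) -> forall x, D x -> U x.
Proof.
move=> D_conn DS [oU [oV [cov [_ [_ dis]]]]] DU x Dx; apply: NNPP => notUx.
apply: D_conn; exists U, V; do 2 (split => //); split; first by move=> z /DS /cov.
split => //; split; first by exists x; split => //; case: (cov x (DS x Dx)).
by move=> z /DS; exact: dis.
Qed.

Lemma connected_ext n (S T : vec n -> Prop) :
  (forall x, S x <-> T x) -> connected S -> connected T.
Proof.
move=> ST S_conn [U [V [oU [oV [cov [[a [Ta Ua]] [[b [Tb Vb]] dis]]]]]]].
apply: S_conn; exists U, V; do 2 (split => //); split; first by move=> x /ST /cov.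
split; first by exists a; split => //; exact/ST.
split; first by exists b; split => //; exact/ST.
by move=> x /ST; exact: dis.
Qed.

Lemma connected_single n (x0 : vec n) : connected (fun z => z = x0).
Proof. by move=> [U [V [_ [_ [_ [[a [-> Ua]] [[b [-> Vb]] dis]]]]]]]; exact: dis Ua Vb. Qed.

Lemma connected_union n (E D : vec n -> Prop) z : connected E -> connected D -> E z -> D z ->
  connected (fun x => E x \/ D x).
Proof.
move=> E_conn D_conn Ez Dz [U0 [V0 sep0]].
apply: (separates_wlog sep0 (or_introl Ez)) => U V sep Uz.
have side W : connected W -> Defs.subset W (fun x => E x \/ D x) -> W z -> forall x, W x -> U x.
  by move=> W_conn WED Wz; apply: connected_in_side W_conn WED sep _; exists z.
have [_ [_ [_ [_ [[b [[Eb|Db] Vb]] dis]]]]] := sep.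
- by apply: (dis b (or_introl Eb) _ Vb); apply: (side E) => // x Ex; left.
- by apply: (dis b (or_intror Db) _ Vb); apply: (side D) => // x Dx; right.
Qed.

Lemma connected_add_limit n (C : vec n -> Prop) u x :
  connected C -> (forall k, C (u k)) -> vcv u x -> connected (fun z => C z \/ z = x).
Proof.
move=> C_conn Cu ux [U0 [V0 sep0]].
apply: (separates_wlog sep0 (or_intror erefl)) => U V sep Ux.
have [oU [_ [_ [_ [[b [Cb Vb]] dis]]]]] := sep.
have C_U : forall z, C z -> U z.
  apply: (connected_in_side C_conn _ sep); first by move=> z Cz; left.
  by have [N HN] := vcv_open oU Ux ux; exists (u N); split; [|exact: HN N (leqnn N)].
case: Cb => [Cb|bx]; first exact: dis (or_introl Cb) (C_U b Cb) Vb.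
by subst b; exact: dis (or_intror erefl) Ux Vb.
Qed.

Definition component_of n (S : vec n -> Prop) x0 z :=
  exists D, Defs.subset D S /\ connected D /\ D x0 /\ D z.

Lemma component_of_conn_component n (S : vec n -> Prop) x0 :
  S x0 -> conn_component (component_of S x0) S.
Proof.
move=> Sx0; have Cx0 : component_of S x0 x0.
  exists (fun z => z = x0); split; first by move=> z ->.
  by split; [exact: connected_single | split].
split; first by exists x0.
split; first by move=> z [D [DS [_ [_ Dz]]]]; exact: DS.
split.
  move=> [U0 [V0 sep0]]; apply: (separates_wlog sep0 Cx0) => U V sep Ux0.
  have [_ [_ [_ [_ [[b [[Db [DbS [Db_conn [Dbx0 Dbb]]]] Vb]] dis]]]]] := sep.
  have DbC : Defs.subset Db (component_of S x0) by move=> z Dz; exists Db.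
  apply: (dis b (DbC b Dbb) _ Vb).
  by apply: (connected_in_side Db_conn DbC sep) => //; exists x0.
move=> D DS D_conn [z [[E [ES [E_conn [Ex0 Ez]]]] Dz]] w Dw.
exists (fun x => E x \/ D x); split; first by move=> x [/ES|/DS].
by split; [exact: connected_union E_conn D_conn Ez Dz | split; [left|right]].
Qed.

Lemma conn_component_maximal n (C S D : vec n -> Prop) : conn_component C S ->
  Defs.subset D S -> connected D -> (exists x, C x /\ D x) -> Defs.subset D C.
Proof. by move=> [_ [_ [_ maxC]]]; exact: maxC. Qed.

Lemma conn_component_seq_closed n (C S : vec n -> Prop) u x :
  conn_component C S -> S x -> (forall k, C (u k)) -> vcv u x -> C x.
Proof.
move=> compC Sx Cu ux; have [_ [CS [C_conn _]]] := compC.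
apply: (conn_component_maximal compC _ (connected_add_limit C_conn Cu ux)); last by right.
  by move=> z [/CS|->].
by exists (u 0%nat); split; [|left].
Qed.

Definition seq_closed_in a b (P : R -> Prop) :=
  forall (u : nat -> R) t, (forall k, a <= u k <= b) -> (forall k, P (u k)) -> Un_cv u t -> P t.

Lemma seq_closed_in_sub a b c d P : a <= c -> d <= b -> seq_closed_in a b P -> seq_closed_in c d P.
Proof. by move=> ac db Pcl u t ucd; apply: Pcl => k; have := ucd k; lra. Qed.

(* The supremum of the [P]-part of [a, b] lies in [P] and is approached from the right by
   points of [Q]. *)
Lemma interval_endpoints_not_separated a b (P Q : R -> Prop) : a <= b -> P a -> Q b ->
  (forall t, a <= t <= b -> P t \/ Q t) -> (forall t, a <= t <= b -> P t -> Q t -> False) ->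
  seq_closed_in a b P -> seq_closed_in a b Q -> False.
Proof.
move=> ab Pa Qb cov dis Pcl Qcl.
pose E t := a <= t <= b /\ P t.
have [s s_lub] := completeness E (ex_intro _ b (fun t Et => proj2 (proj1 Et)))
  (ex_intro _ a (conj (conj (Rle_refl a) ab) Pa)).
have [s_ub s_least] := s_lub.
have as_ : a <= s by apply: s_ub; split => //; lra.
have sb : s <= b by apply: s_least => t [[_ ?] _].
have [u Eu] := choice _ (lub_approx s_lub).
have Ps : P s.
  apply: (Pcl u) => [k|k|]; first by have [[? _] _] := Eu k.
    by have [[_ ?] _] := Eu k.
  apply: cv_inv_succ_bound => k; have [Euk gt] := Eu k; have le := s_ub _ Euk.
  by rewrite Rabs_left1; lra.
case: (Rle_lt_or_eq_dec _ _ sb) => [sb' | s_eq_b]; last first.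
  by subst s; apply: (dis b _ Ps Qb); lra.
pose v k := s + (b - s) * / INR k.+1.
have v_in k : s < v k <= b by have := inv_succ_gt0 k; have := inv_succ_le1 k; rewrite /v; nra.
have v_ab k : a <= v k <= b by have := v_in k; lra.
apply: (dis s _ Ps); first lra.
apply: (Qcl v) => [k|k|]; first exact: v_ab.
  case: (cov (v k) (v_ab k)) => // Pv.
  by have := s_ub (v k) (conj (v_ab k) Pv); have := v_in k; lra.
have : Un_cv v (s + (b - s) * 0).
  by apply: CV_plus; [exact: cv_const | apply: CV_mult; [exact: cv_const | exact: cv_inv_succ]].
by rewrite Rmult_0_r Rplus_0_r.
Qed.

Lemma interval_not_separated a b (P Q : R -> Prop) s t :
  a <= s <= b -> a <= t <= b -> P s -> Q t ->
  (forall x, a <= x <= b -> P x \/ Q x) -> (forall x, a <= x <= b -> P x -> Q x -> False) ->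
  seq_closed_in a b P -> seq_closed_in a b Q -> False.
Proof.
move=> s_in t_in Ps Qt cov dis Pcl Qcl.
have [st | ts] : s <= t \/ t <= s by lra.
- apply: (interval_endpoints_not_separated st Ps Qt) => [x x_in|x x_in||].
  + by apply: cov; lra.
  + by apply: dis; lra.
  + by apply: seq_closed_in_sub Pcl; lra.
  + by apply: seq_closed_in_sub Qcl; lra.
- apply: (interval_endpoints_not_separated ts Qt Ps) => [x x_in|x x_in Qx Px||].
  + by case: (cov x ltac:(lra)); [right|left].
  + by apply: (dis x) => //; lra.
  + by apply: seq_closed_in_sub Qcl; lra.
  + by apply: seq_closed_in_sub Pcl; lra.
Qed.

Lemma convex_connected p (D : vec p -> Prop) : is_convex D -> connected D.
Proof.
move=> D_convex [U [V sep]].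
have [_ [_ [cov [[a [Da Ua]] [[b [Db Vb]] dis]]]]] := sep.
pose path t := vcomb t b a.
have D_path t : 0 <= t <= 1 -> D (path t) by move=> t01; apply: D_convex.
have side_closed W W' : separates D W W' -> seq_closed_in 0 1 (fun t => W (path t)).
  move=> [_ [oW' [covW [_ [_ disW]]]]] u t u01 Wu ut.
  have t01 := cv_in_interval u01 ut.
  case: (covW _ (D_path t t01)) => // W't.
  have [N HN] := vcv_open oW' W't (vcv_vcomb b a ut).
  by case: (disW _ (D_path _ (u01 N)) (Wu N) (HN N (leqnn N))).
apply: (@interval_not_separated 0 1 (fun t => U (path t)) (fun t => V (path t)) 0 1).
- lra.
- lra.
- by rewrite /path vcomb_0.
- by rewrite /path vcomb_1.
- by move=> t /D_path /cov.
- by move=> t /D_path; exact: dis.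
- exact: side_closed sep.
- exact: side_closed (separates_sym sep).
Qed.

Definition fiber_union n a b (P : R -> vec n -> Prop) z := exists u, a <= u <= b /\ P u z.

Section FiberUnion.
Variables (n : nat) (a b r : R) (P : R -> vec n -> Prop).
Hypotheses (P_conn : forall u, a <= u <= b -> connected (P u))
  (P_bounded_point : forall u, a <= u <= b -> exists z, P u z /\ forall i, Rabs (z i) <= r)
  (P_closed_graph : forall us u ws w, (forall k, a <= us k <= b) ->
     (forall k, P (us k) (ws k)) -> Un_cv us u -> vcv ws w -> P u w).

Lemma fiber_in_side U V u : separates (fiber_union a b P) U V -> a <= u <= b ->
  (exists z, P u z /\ U z) -> forall z, P u z -> U z.
Proof.
move=> sep u_in; apply: (connected_in_side (P_conn u_in) _ sep).
by move=> z Pz; exists u.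
Qed.

(* Only the bounded points of the fibres are followed along a convergent sequence of
   parameters; they all lie on the same side because the fibres are connected. *)
Lemma fiber_side_seq_closed U V : separates (fiber_union a b P) U V ->
  seq_closed_in a b (fun u => exists z, P u z /\ U z).
Proof.
move=> sep us u us_in PU usu; have [_ [oV [cov [_ [_ dis]]]]] := sep.
have ws_ex k : exists w, (P (us k) w /\ forall i, Rabs (w i) <= r) /\ U w.
  have [w [Pw wr]] := P_bounded_point (us_in k).
  by exists w; split => //; exact: fiber_in_side sep (us_in k) (PU k) w Pw.
have [ws Hws] := choice _ ws_ex.
have [phi [w [phi_incr wsw]]] : exists phi w, strict_incr phi /\ vcv (fun k => ws (phi k)) w.
  by apply: (bounded_vcv_subseq (M := r)) => k i; have [[_ ?] _] := Hws k.
have Pw : P u w.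
  apply: (P_closed_graph (us := fun k => us (phi k)) (ws := fun k => ws (phi k))) => //.
  - by move=> k; have [[? _] _] := Hws (phi k).
  - exact: cv_subseq.
have u_in := cv_in_interval us_in usu.
case: (cov w (ex_intro _ u (conj u_in Pw))) => [Uw|Vw]; first by exists w.
have [N HN] := vcv_open oV Vw wsw; have [[Pws _] Uws] := Hws (phi N).
by case: (dis (ws (phi N)) (ex_intro _ _ (conj (us_in _) Pws)) Uws (HN N (leqnn N))).
Qed.

Lemma connected_fiber_union : connected (fiber_union a b P).
Proof.
move=> [U [V sep]].
have [_ [_ [cov [[x [[s [s_in Ps]] Ux]] [[y [[t [t_in Pt]] Vy]] dis]]]]] := sep.
apply: (@interval_not_separated a b (fun u => exists z, P u z /\ U z)
          (fun u => exists z, P u z /\ V z) s t) => //.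
- by exists x.
- by exists y.
- move=> u u_in; have [z [Pz _]] := P_bounded_point u_in.
  by case: (cov z (ex_intro _ u (conj u_in Pz))) => ?; [left|right]; exists z.
- move=> u u_in PU [z [Pz Vz]].
  by apply: (dis z); [exists u | exact: fiber_in_side sep u_in PU z Pz | ].
- exact: fiber_side_seq_closed sep.
- exact: fiber_side_seq_closed (separates_sym sep).
Qed.

End FiberUnion.

(** Monotone variational inequalities *)

Definition Minty p (G : vec p -> vec p) (S : vec p -> Prop) x :=
  S x /\ forall y, S y -> 0 <= inner (G y) (vsub y x).

Definition cap_ball p (S : vec p -> Prop) r z := S z /\ sqnorm z <= r * r.

Section VariationalInequality.
Variables (p : nat) (G : vec p -> vec p) (S : vec p -> Prop).

Lemma Sol_Minty x : monotone_on S G -> Sol G S x -> Minty G S x.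
Proof.
move=> G_mono [Sx solx]; split => // y Sy.
by have := G_mono x y Sx Sy; have := solx y Sy; rewrite inner_subl; lra.
Qed.

(* Minty's lemma: test the Minty inequality along the segment [x, y] and let it shrink to x. *)
Lemma Minty_Sol x : is_convex S -> seq_continuous_on S G -> Minty G S x -> Sol G S x.
Proof.
move=> S_convex G_cont [Sx mintyx]; split => // y Sy.
pose ts k := / INR k.+1.
have S_seg k : S (vcomb (ts k) y x).
  by apply: S_convex => //; have := inv_succ_gt0 k; have := inv_succ_le1 k; rewrite /ts; lra.
apply: (cv_lb (u := fun k => inner (G (vcomb (ts k) y x)) (vsub y x))).
  move=> k; have := mintyx _ (S_seg k); rewrite inner_vcomb_sub.
  by have := inv_succ_gt0 k; rewrite /ts; nra.
apply: vcv_inner; last exact: vcv_const.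
by apply: G_cont => //; rewrite -{2}(vcomb_0 y x); apply/vcv_vcomb/cv_inv_succ.
Qed.

Lemma Minty_convex : is_convex S -> is_convex (Minty G S).
Proof.
move=> S_convex x y t [Sx mx] [Sy my] t01; split; first exact: S_convex.
move=> z Sz; have := mx z Sz; have := my z Sz.
rewrite -/(vcomb t x y) !inner_subr inner_vcomb; nra.
Qed.

Lemma Sol_convex : is_convex S -> seq_continuous_on S G -> monotone_on S G -> is_convex (Sol G S).
Proof.
move=> S_convex G_cont G_mono x y t Solx Soly t01; apply: Minty_Sol => //.
by apply: Minty_convex => //; exact: Sol_Minty.
Qed.

Lemma Sol_sub (T : vec p -> Prop) x : (forall z, T z -> S z) -> T x -> Sol G S x -> Sol G T x.
Proof. by move=> TS Tx [_ solx]; split => // y /TS; exact: solx. Qed.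

Lemma monotone_on_sub (T : vec p -> Prop) : (forall z, T z -> S z) ->
  monotone_on S G -> monotone_on T G.
Proof. by move=> TS G_mono x y /TS Sx /TS Sy; exact: G_mono. Qed.

Lemma seq_continuous_on_sub (T : vec p -> Prop) : (forall z, T z -> S z) ->
  seq_continuous_on S G -> seq_continuous_on T G.
Proof. by move=> TS G_cont u x /TS Sx Tu; apply: G_cont => // k; exact: TS. Qed.

Lemma cap_ball_convex r : is_convex S -> is_convex (cap_ball S r).
Proof.
move=> S_convex x y t [Sx xr] [Sy yr] t01; split; first exact: S_convex.
by have := sqnorm_vcomb_le x y t01; rewrite /vcomb; nra.
Qed.

Lemma cap_ball_seq_closed r : seq_closed S -> seq_closed (cap_ball S r).
Proof.
move=> S_closed u x Su ux; split; first by apply: (S_closed u) => // k; case: (Su k).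
by apply: (cv_ub (u := fun k => sqnorm (u k))); [move=> k; case: (Su k) | exact: vcv_sqnorm].
Qed.

(* A test point [y] outside the ball is replaced by the point of the segment [x, y] on the
   sphere. *)
Lemma Sol_cap_ball_interior r x : is_convex S ->
  Sol G (cap_ball S r) x -> sqnorm x < r * r -> Sol G S x.
Proof.
move=> S_convex [[Sx _] solx] xr; split => // y Sy.
have [yr | yr] := Rle_or_lt (sqnorm y) (r * r); first exact: solx.
pose th := (r * r - sqnorm x) / (sqnorm y - sqnorm x).
have th_eq : th * (sqnorm y - sqnorm x) = r * r - sqnorm x by rewrite /th; field; lra.
have th01 : 0 < th < 1 by split; nra.
have th_in : cap_ball S r (vcomb th y x).
  split; first by apply: S_convex => //; lra.
  by have := sqnorm_vcomb_le y x (conj (Rlt_le _ _ (proj1 th01)) (Rlt_le _ _ (proj2 th01))); nra.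
by have := solx _ th_in; rewrite inner_vcomb_sub; nra.
Qed.

End VariationalInequality.

(* The points of the convex set [Sol G (cap_ball S r)] strictly inside the ball are solutions,
   so along a segment starting at [x0] the squared norm cannot jump over the gap between
   [M * M] and [r * r]. *)
Lemma Sol_cap_ball_bounded p (G : vec p -> vec p) (S : vec p -> Prop) M r x0 :
  is_convex S -> seq_continuous_on S G -> monotone_on S G -> 0 <= M < r ->
  Sol G S x0 -> (forall z, Sol G S z -> sqnorm z <= M * M) ->
  forall z, Sol G (cap_ball S r) z -> sqnorm z <= M * M.
Proof.
move=> S_convex G_cont G_mono Mr Solx0 SolM z Solz.
have capS : forall w, cap_ball S r w -> S w by move=> w [].
have x0_cap : Sol G (cap_ball S r) x0.
  have x0_in : cap_ball S r x0 by split; [case: Solx0 | have := SolM x0 Solx0; nra].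
  exact: (Sol_sub capS x0_in Solx0).
have Sol_seg : is_convex (Sol G (cap_ball S r)).
  apply: Sol_convex; first exact: cap_ball_convex.
    exact: seq_continuous_on_sub G_cont.
  exact: monotone_on_sub G_mono.
pose g th := sqnorm (vcomb th z x0).
have g_gap th : 0 <= th <= 1 -> g th <= M * M \/ r * r <= g th.
  move=> th01; have [gr | ] := Rlt_or_le (g th) (r * r); last by right.
  by left; apply/SolM/(Sol_cap_ball_interior S_convex _ gr)/Sol_seg.
have g_cv u th : Un_cv u th -> Un_cv (fun k => g (u k)) (g th).
  by move=> uth; exact/vcv_sqnorm/vcv_vcomb.
rewrite -(vcomb_1 z x0) -/(g 1).
case: (g_gap 1) => // [|g1]; first lra.
exfalso; apply: (@interval_not_separated 0 1 (fun th => g th <= M * M)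
  (fun th => r * r <= g th) 0 1) => //; try lra.
- by rewrite /g vcomb_0; apply: SolM.
- by move=> th _; nra.
- by move=> u th _ gu /g_cv; apply: cv_ub.
- by move=> u th _ gu /g_cv; apply: cv_lb.
Qed.

(** Existence of solutions on compact convex sets *)

Lemma seq_compact_min p (S : vec p -> Prop) (h : vec p -> R) r c :
  seq_closed S -> (forall z, S z -> forall i, Rabs (z i) <= r) -> (exists z, S z) ->
  (forall z, S z -> c <= h z) ->
  (forall u x, (forall k, S (u k)) -> vcv u x -> Un_cv (fun k => h (u k)) (h x)) ->
  exists x, S x /\ forall z, S z -> h x <= h z.
Proof.
move=> S_closed S_bounded [z0 Sz0] hc h_cont.
pose E v := exists z, S z /\ v = - h z.
have E_bound : bound E by exists (- c) => v [z [Sz ->]]; have := hc z Sz; lra.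
have [s s_lub] := completeness E E_bound (ex_intro _ _ (ex_intro _ z0 (conj Sz0 erefl))).
have [u Eu] := choice _ (lub_approx s_lub).
have [w Hw] := choice _ (fun k => proj1 (Eu k)).
have [phi [x [phi_incr wx]]] : exists phi x, strict_incr phi /\ vcv (fun k => w (phi k)) x.
  by apply: (bounded_vcv_subseq (M := r)) => k; apply: S_bounded; case: (Hw k).
have Sx : S x by apply: S_closed wx => k; case: (Hw (phi k)).
exists x; split => // z Sz.
have : - h z <= s by apply: (proj1 s_lub); exists z.
suff : h x <= - s by lra.
apply: (Rle_cv_lim (Vn := fun k => - s + / INR k.+1) _ (h_cont _ _ _ wx)).
- move=> k; have [_ ew] := Hw (phi k); have [_ gt] := Eu (phi k).
  have := inv_succ_antimonotone (strict_incr_ge phi_incr k); lra.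
- by move=> k; case: (Hw (phi k)).
- by rewrite -[X in Un_cv _ X]Rplus_0_r; apply: CV_plus; [exact: cv_const | exact: cv_inv_succ].
Qed.

Lemma nonneg_of_quadratic_nonneg c d :
  (forall t, 0 < t <= 1 -> 0 <= 2 * t * c + t * t * d) -> 0 <= c.
Proof.
move=> quad; apply: Rnot_lt_le => c_neg.
pose D := Rabs d + 1; have D1 : 1 <= D by have := Rabs_pos d; rewrite /D; lra.
pose t := Rmin 1 (- c / D).
have t1 : t <= 1 by apply: Rmin_l.
have t0 : 0 < t by apply: Rmin_pos; [lra | apply: Rdiv_lt_0_compat; lra].
have tD : t * D <= - c.
  have -> : - c = - c / D * D by field; lra.
  by apply: Rmult_le_compat_r; [lra | apply: Rmin_r].
by have := quad t (conj t0 t1); have := Rle_abs d; rewrite /D in tD; nra.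
Qed.

Definition simplex k (mu : vec k) := (forall j, 0 <= mu j) /\ \big[Rplus/0]_(j < k) mu j = 1.

Definition unitv k (j : 'I_k) : vec k := fun l => if l == j then 1 else 0.

Lemma inner_unitv k (f : vec k) j : inner f (unitv j) = f j.
Proof.
rewrite /inner (bigD1 j) //= big1 => [|l /negbTE lj]; rewrite /unitv ?eqxx ?lj; ring.
Qed.

Lemma unitv_simplex k (j : 'I_k) : simplex (unitv j).
Proof.
split; first by move=> l; rewrite /unitv; case: (l == j); lra.
by rewrite -[RHS](inner_unitv (fun _ => 1) j); apply: eq_bigr => l _; ring.
Qed.

Lemma simplex_convex k : is_convex (@simplex k).
Proof.
move=> x y t [x0 x1] [y0 y1] t01; split.
  by move=> j; rewrite /vadd /vscale; have := x0 j; have := y0 j; nra.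
by rewrite /vadd /vscale big_Rlin x1 y1; ring.
Qed.

Lemma simplex_seq_closed k : seq_closed (@simplex k).
Proof.
move=> u x u_in ux; split.
  by move=> j; apply: (cv_lb (u := fun l => u l j)) (ux j) => l; case: (u_in l).
apply: (UL_sequence (fun l => \big[Rplus/0]_(j < k) u l j)).
  by apply: cv_big => j _; exact: ux.
rewrite (_ : (fun _ => _) = fun _ => 1); first exact: cv_const.
by apply: functional_extensionality => l; case: (u_in l).
Qed.

Lemma simplex_coord_bound k (mu : vec k) j : simplex mu -> Rabs (mu j) <= 1.
Proof.
move=> [mu0 mu1]; have := big_Rle_sum j mu0; rewrite mu1 => ?.
by have := mu0 j; split_Rabs; lra.
Qed.

Lemma cv_Rmax0 u l : Un_cv u l -> Un_cv (fun k => Rmax 0 (u k)) (Rmax 0 l).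
Proof.
move=> ul e e0; have [N HN] := ul e e0; exists N => k kN.
apply: Rle_lt_trans (HN k kN); rewrite /Rdist /Rmax.
by case: Rle_dec; case: Rle_dec => *; split_Rabs; lra.
Qed.

Section DissipativeMatrix.
Variables (k : nat) (A : 'I_k -> 'I_k -> R).
Hypothesis A_dissipative : forall i j, A i j + A j i <= 0.

Definition mat_apply (mu : vec k) : vec k := fun i => inner (A i) mu.

Definition excess (mu : vec k) : vec k := fun i => Rmax 0 (mat_apply mu i).

Lemma dissipative_form_nonpos (z : vec k) : (forall i, 0 <= z i) ->
  \big[Rplus/0]_(j < k) (z j * inner z (fun i => A i j)) <= 0.
Proof.
move=> z0.
have form : \big[Rplus/0]_(j < k) (z j * inner z (fun i => A i j)) =
    \big[Rplus/0]_(i < k) \big[Rplus/0]_(j < k) (z i * z j * A i j).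
  rewrite exchange_big /=; apply: eq_bigr => j _; rewrite /inner big_distrr /=.
  by apply: eq_bigr => i _; ring.
have form' : \big[Rplus/0]_(j < k) (z j * inner z (fun i => A i j)) =
    \big[Rplus/0]_(i < k) \big[Rplus/0]_(j < k) (z i * z j * A j i).
  by apply: eq_bigr => j _; rewrite /inner big_distrr /=; apply: eq_bigr => i _; ring.
suff : \big[Rplus/0]_(i < k) \big[Rplus/0]_(j < k) (z i * z j * (A i j + A j i)) <= 0.
  rewrite (eq_bigr (fun i => \big[Rplus/0]_(j < k) (z i * z j * A i j)
     + \big[Rplus/0]_(j < k) (z i * z j * A j i))); last first.
    by move=> i _; rewrite -big_split /=; apply: eq_bigr => j _; ring.
  rewrite big_split /= -form -form' => le.
  by apply: (Rmult_le_reg_l 2); [lra | rewrite Rmult_0_r -Rplus_diag; exact: le].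
apply: big_Rle0 => i _; apply: big_Rle0 => j _.
have zz : 0 <= z i * z j by apply: Rmult_le_pos.
by have := A_dissipative i j; nra.
Qed.

Lemma Rmax0_sqr_le a b : a <= b -> Rmax 0 a * Rmax 0 a <= b * b.
Proof. by rewrite /Rmax; case: Rle_dec => *; nra. Qed.

(* Compare [mu0] with the points of the segment from [mu0] towards the vertex [unitv j]. *)
Lemma excess_first_order mu0 : simplex mu0 ->
  (forall mu, simplex mu -> sqnorm (excess mu0) <= sqnorm (excess mu)) ->
  forall j, sqnorm (excess mu0) <= inner (excess mu0) (fun i => A i j).
Proof.
move=> mu0_in mu0_min j; set z := excess mu0.
pose w := vsub (fun i => A i j) z.
suff : 0 <= inner z w by rewrite inner_subr -/(sqnorm z); lra.
apply: (@nonneg_of_quadratic_nonneg _ (sqnorm w)) => t t01.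
have mut_in : simplex (vcomb t (unitv j) mu0).
  by apply: simplex_convex => //; [exact: unitv_simplex | lra].
have := mu0_min _ mut_in; rewrite -/z => le_mut.
suff : sqnorm (excess (vcomb t (unitv j) mu0)) <= sqnorm (fun i => z i + t * w i).
  by rewrite sqnorm_add_scale; lra.
apply: big_Rle => i _; apply: Rmax0_sqr_le.
have mz : inner (A i) mu0 <= z i by apply: Rmax_r.
by rewrite /mat_apply inner_vcomb inner_unitv /w /vsub; nra.
Qed.

(* Minimise the squared excess over the simplex; at a minimiser with nonzero excess [z], the
   first-order conditions weighted by [z] give [|z|^2 * sum z <= z^T A z <= 0]. *)
Lemma dissipative_simplex_point : (0 < k)%nat ->
  exists mu, simplex mu /\ forall i, mat_apply mu i <= 0.
Proof.
move=> k_gt0.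
have [mu0 [mu0_in mu0_min]] : exists mu0 : vec k, simplex mu0 /\
    forall mu, simplex mu -> sqnorm (excess mu0) <= sqnorm (excess mu).
  apply: (@seq_compact_min k _ (fun mu => sqnorm (excess mu)) 1 0 (@simplex_seq_closed k)).
  - by move=> mu mu_in i; exact: simplex_coord_bound.
  - by exists (unitv (Ordinal k_gt0)); exact: unitv_simplex.
  - by move=> mu _; exact: sqnorm_ge0.
  - move=> u x _ ux; apply: vcv_sqnorm => i; apply: cv_Rmax0.
    by apply: cv_big => j _; apply: CV_mult; [exact: cv_const | exact: ux].
exists mu0; split => // i; set z := excess mu0.
have z0 l : 0 <= z l by apply: Rmax_l.
have mz : mat_apply mu0 i <= z i by apply: Rmax_r.
have [z_eq0 | z_gt0] : sqnorm z = 0 \/ 0 < sqnorm z by have := sqnorm_ge0 z; lra.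
  by have := sqr_coord_le_sqnorm z i; rewrite z_eq0; have := z0 i; nra.
exfalso.
have sum_ge0 : 0 <= \big[Rplus/0]_(j < k) z j by apply: big_Rge0 => j _; exact: z0.
have sum_gt0 : 0 < \big[Rplus/0]_(j < k) z j.
  case: (Rle_lt_or_eq_dec _ _ sum_ge0) => // s_eq0.
  by have := big_Rge0_eq0 z z0 (esym s_eq0); rewrite -/(inner z z) -/(sqnorm z); lra.
have : sqnorm z * \big[Rplus/0]_(j < k) z j <= 0.
  apply: Rle_trans (dissipative_form_nonpos z0); rewrite big_distrr /=.
  by apply: big_Rle => j _; rewrite Rmult_comm; apply: Rmult_le_compat_l;
    [exact: z0 | exact: excess_first_order].
by have := Rmult_lt_0_compat _ _ z_gt0 sum_gt0; lra.
Qed.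

End DissipativeMatrix.

Lemma inner_big_comb p k (g : vec p) (mu : 'I_k -> R) (Y : 'I_k -> vec p) :
  inner g (fun l => \big[Rplus/0]_(j < k) (mu j * Y j l)) =
  \big[Rplus/0]_(j < k) (mu j * inner g (Y j)).
Proof.
rewrite /inner; under eq_bigr => l _ do rewrite big_distrr /=.
rewrite exchange_big /=; apply: eq_bigr => j _; rewrite big_distrr /=.
by apply: eq_bigr => l _; ring.
Qed.

(* The matrix [A i j = <G (Y i), Y j - Y i>] is dissipative by monotonicity; mix the [Y j]
   with the weights given by [dissipative_simplex_point]. *)
Lemma finite_Minty_point p (G : vec p -> vec p) (S : vec p -> Prop) k (Y : 'I_k -> vec p) :
  (0 < k)%nat -> is_convex S -> monotone_on S G -> (forall j, S (Y j)) ->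
  exists x, S x /\ forall j, 0 <= inner (G (Y j)) (vsub (Y j) x).
Proof.
move=> k_gt0 S_convex G_mono SY.
pose A i j := inner (G (Y i)) (vsub (Y j) (Y i)).
have A_dissipative i j : A i j + A j i <= 0.
  by have := G_mono _ _ (SY j) (SY i); rewrite /A !inner_subr !inner_subl; lra.
have [mu [[mu0 mu1] A_mu]] := dissipative_simplex_point A_dissipative k_gt0.
exists (fun l => \big[Rplus/0]_(j < k) (mu j * Y j l)); split.
  exact: convex_big_comb.
move=> i; have mat_eq : mat_apply A mu i = \big[Rplus/0]_(j < k)
    (1 * (mu j * inner (G (Y i)) (Y j)) + (- inner (G (Y i)) (Y i)) * mu j).
  by apply: eq_bigr => j _; rewrite /A inner_subr; ring.
have := A_mu i; rewrite mat_eq big_Rlin mu1 -inner_big_comb inner_subr.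
lra.
Qed.

Lemma bounded_seq_not_spread p (u : nat -> vec p) r eps : 0 < eps ->
  (forall N i, Rabs (u N i) <= r) ->
  ~ (forall N M, (N < M)%nat -> exists i, eps <= Rabs (u M i - u N i)).
Proof.
move=> e0 u_bounded spread.
have [phi [x [phi_incr ux]]] := bounded_vcv_subseq u_bounded.
have [N HN] := vcv_vdist ux (ltac:(lra) : 0 < eps / 2).
have [i far] := spread _ _ (phi_incr N).
have := Rabs_coord_le_vdist x (u (phi N)) i; have := HN N (leqnn N).
have := Rabs_coord_le_vdist x (u (phi N.+1)) i; have := HN N.+1 (leqnSn N).
by move: far; split_Rabs; lra.
Qed.

(* Greedy construction: if no finite eps-net existed, one could keep adding points of [S]
   that are eps-far from all previous ones. *)
Lemma finite_net p (S : vec p -> Prop) r eps : 0 < eps ->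
  (forall z, S z -> forall i, Rabs (z i) <= r) ->
  exists k (Y : 'I_k -> vec p), (forall j, S (Y j)) /\
    forall y, S y -> exists j, forall i, Rabs (y i - Y j i) < eps.
Proof.
move=> e0 S_bounded; apply: NNPP => no_net.
pose x0 : vec p := fun _ => 0.
pose in_S (L : seq (vec p)) := forall j, (j < size L)%nat -> S (nth x0 L j).
have far_point (L : seq (vec p)) : exists y, in_S L ->
    S y /\ forall j, (j < size L)%nat -> exists i, eps <= Rabs (y i - nth x0 L j i).
  have [L_in | L_out] := classic (in_S L); last by exists x0.
  apply: NNPP => no_far; apply: no_net; exists (size L), (fun j => nth x0 L j); split.
    by move=> j; apply: L_in; exact: ltn_ord.
  move=> y Sy; apply: NNPP => no_close; apply: no_far; exists y => _; split => // j jL.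
  apply: NNPP => close; apply: no_close; exists (Ordinal jL) => i /=.
  by apply: Rnot_le_lt => le; apply: close; exists i.
have [f Hf] := choice _ far_point.
pose fix Ls N := if N is N'.+1 then f (Ls N') :: Ls N' else [::].
have Ls_in N : in_S (Ls N).
  elim: N => [|N IH] [|j] //= jN; [exact: (proj1 (Hf _ IH)) | exact: IH].
have Ls_nth N M : (N < M)%nat -> exists j, (j < size (Ls M))%nat /\ nth x0 (Ls M) j = f (Ls N).
  elim: M => [|M IH] // NM; have [-> | NM'] := eqVneq N M; first by exists 0%nat.
  by have [j [jM <-]] := IH ltac:(lia); exists j.+1.
apply: (@bounded_seq_not_spread p (fun N => f (Ls N)) r eps) => // [N i | N M NM].
  by apply: S_bounded; exact: (proj1 (Hf _ (Ls_in N))).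
have [j [jM <-]] := Ls_nth _ _ NM.
exact: (proj2 (Hf _ (Ls_in M)) j jM).
Qed.

Lemma approx_Minty_point p (G : vec p -> vec p) (S : vec p -> Prop) r eps : 0 < eps ->
  is_convex S -> monotone_on S G -> (forall z, S z -> forall i, Rabs (z i) <= r) ->
  (exists z, S z) ->
  exists x, S x /\ forall y, S y -> exists w, S w /\ (forall i, Rabs (y i - w i) < eps) /\
    0 <= inner (G w) (vsub w x).
Proof.
move=> e0 S_convex G_mono S_bounded [z0 Sz0].
have [k [Y [SY Y_net]]] := finite_net e0 S_bounded.
have k_gt0 : (0 < k)%nat by have [j _] := Y_net z0 Sz0; exact: (leq_ltn_trans (leq0n j)).
have [x [Sx Yx]] := finite_Minty_point k_gt0 S_convex G_mono SY.
exists x; split => // y Sy; have [j yj] := Y_net y Sy.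
by exists (Y j).
Qed.

(* Hartman-Stampacchia for monotone maps: limits of approximate Minty points are Minty
   points, hence solutions. *)
Lemma Sol_exists p (G : vec p -> vec p) (S : vec p -> Prop) r :
  is_convex S -> seq_closed S -> (forall z, S z -> forall i, Rabs (z i) <= r) ->
  (exists z, S z) -> seq_continuous_on S G -> monotone_on S G -> exists x, Sol G S x.
Proof.
move=> S_convex S_closed S_bounded S_ne G_cont G_mono.
have [xs Hxs] := choice _ (fun N =>
  approx_Minty_point (inv_succ_gt0 N) S_convex G_mono S_bounded S_ne).
have [phi [x [phi_incr xsx]]] : exists phi x, strict_incr phi /\ vcv (fun k => xs (phi k)) x.
  by apply: (bounded_vcv_subseq (M := r)) => N; apply: S_bounded; case: (Hxs N).
have Sx : S x by apply: S_closed xsx => k; case: (Hxs (phi k)).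
exists x; apply: Minty_Sol => //; split => // y Sy.
have [w Hw] := choice _ (fun N => proj2 (Hxs N) y Sy).
have wy : vcv w y.
  by move=> i; apply: cv_inv_succ_bound => N; have [_ [+ _]] := Hw N => /(_ i); split_Rabs; lra.
apply: (cv_lb (u := fun k => inner (G (w (phi k))) (vsub (w (phi k)) (xs (phi k))))).
  by move=> k; have [_ [_ ?]] := Hw (phi k).
apply: vcv_inner; last exact: vcv_vsub (vcv_subseq phi_incr wy) xsx.
by apply: G_cont => // k; [case: (Hw (phi k)) | exact: vcv_subseq].
Qed.

(** Scalarization *)

Lemma ri_simplex_vcomb m (xi0 xi1 : 'I_m -> R) t :
  ri_simplex xi0 -> ri_simplex xi1 -> 0 <= t <= 1 -> ri_simplex (vcomb t xi1 xi0).
Proof.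
move=> [pos0 sum0] [pos1 sum1] t01; split.
  by move=> l; rewrite /vcomb /vadd /vscale; have := pos0 l; have := pos1 l; nra.
by rewrite /vcomb /vadd /vscale big_Rlin sum0 sum1; ring.
Qed.

Lemma ri_simplex_ge0 m (xi : 'I_m -> R) : ri_simplex xi -> forall l, 0 <= xi l.
Proof. by move=> [xi_pos _] l; have := xi_pos l; lra. Qed.

Section Scalarization.
Variables (n m : nat) (K : vec n -> Prop) (F : 'I_m -> vec n -> vec n).
Hypotheses (F_cont : forall l, continuous_on K (F l)) (F_mono : monotone_VVI K F).

Lemma Fxi_inner_sub xi x y :
  inner (vsub (Fxi F xi y) (Fxi F xi x)) (vsub y x) =
  \big[Rplus/0]_(l < m) (xi l * inner (vsub (F l y) (F l x)) (vsub y x)).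
Proof.
rewrite /inner; under [RHS]eq_bigr => l _ do rewrite big_distrr.
rewrite exchange_big /=; apply: eq_bigr => i _; rewrite /vsub /Fxi.
transitivity (\big[Rplus/0]_(l < m)
    (1 * (xi l * F l y i) + (-1) * (xi l * F l x i)) * (y i - x i)).
  by rewrite big_Rlin; ring.
by rewrite big_distrl /=; apply: eq_bigr => l _; ring.
Qed.

Lemma Fxi_monotone xi : (forall l, 0 <= xi l) -> monotone_on K (Fxi F xi).
Proof.
move=> xi0 x y Kx Ky; rewrite Fxi_inner_sub; apply: big_Rge0 => l _.
by apply: Rmult_le_pos => //; exact: F_mono.
Qed.

Lemma Fxi_cv (xs : nat -> 'I_m -> R) xi (u : nat -> vec n) x :
  K x -> (forall k, K (u k)) -> vcv xs xi -> vcv u x ->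
  vcv (fun k => Fxi F (xs k) (u k)) (Fxi F xi x).
Proof.
move=> Kx Ku xsxi ux i; apply: cv_big => l _; apply: CV_mult; first exact: xsxi.
exact: (continuous_on_seq (F_cont l) Kx Ku ux i).
Qed.

Lemma Fxi_seq_continuous xi : seq_continuous_on K (Fxi F xi).
Proof. by move=> u x Kx Ku ux; apply: Fxi_cv => //; exact: vcv_const. Qed.

Lemma Sol_Fxi_closed_graph (S : vec n -> Prop) (xs : nat -> 'I_m -> R) xi u x :
  (forall z, S z -> K z) -> seq_closed S ->
  (forall k, Sol (Fxi F (xs k)) S (u k)) -> vcv xs xi -> vcv u x -> Sol (Fxi F xi) S x.
Proof.
move=> SK S_closed Sol_u xsxi ux.
have Sx : S x by apply: S_closed ux => k; case: (Sol_u k).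
split => // y Sy.
apply: (cv_lb (u := fun k => inner (Fxi F (xs k) (u k)) (vsub y (u k)))).
  by move=> k; have [_ solk] := Sol_u k; exact: solk.
apply: vcv_inner; last exact: vcv_vsub (vcv_const y) ux.
by apply: Fxi_cv => // [|k]; [exact: SK | apply: SK; case: (Sol_u k)].
Qed.

Hypotheses (K_closed : seq_closed K) (K_convex : is_convex K).

Lemma Sol_Fxi_connected xi : ri_simplex xi -> connected (Sol (Fxi F xi) K).
Proof.
move=> xi_ri; apply/convex_connected/Sol_convex => //.
  exact: Fxi_seq_continuous.
exact/Fxi_monotone/ri_simplex_ge0.
Qed.

Lemma Sol_Fxi_in_component C xi : conn_component C (SolPr F K) -> ri_simplex xi ->
  (exists x, C x /\ Sol (Fxi F xi) K x) -> Defs.subset (Sol (Fxi F xi) K) C.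
Proof.
move=> compC xi_ri; apply: (conn_component_maximal compC); last exact: Sol_Fxi_connected.
by move=> x Solx; exists xi.
Qed.

(* By contradiction: truncated solutions on the sphere for parameters tending to [t]
   accumulate at a truncated solution for [t] on the sphere, against [Sol_cap_ball_bounded]. *)
Lemma Sol_cap_ball_near xi0 xi1 t M r : ri_simplex xi0 -> ri_simplex xi1 -> 0 <= t <= 1 ->
  0 <= M < r -> (exists x, Sol (Fxi F (vcomb t xi1 xi0)) K x) ->
  (forall z, Sol (Fxi F (vcomb t xi1 xi0)) K z -> sqnorm z <= M * M) ->
  exists d, 0 < d /\ forall s, 0 <= s <= 1 -> Rabs (s - t) < d ->
    forall z, Sol (Fxi F (vcomb s xi1 xi0)) (cap_ball K r) z -> sqnorm z < r * r.
Proof.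
move=> ri0 ri1 t01 Mr [xt Solxt] SolM; apply: NNPP => no_d.
have far N : exists sz : R * vec n, (0 <= sz.1 <= 1 /\ Rabs (sz.1 - t) < / INR N.+1) /\
    Sol (Fxi F (vcomb sz.1 xi1 xi0)) (cap_ball K r) sz.2 /\ r * r <= sqnorm sz.2.
  apply: NNPP => no_sz; apply: no_d; exists (/ INR N.+1); split; first exact: inv_succ_gt0.
  by move=> s s01 st z Solz; apply: Rnot_le_lt => zr; apply: no_sz; exists (s, z).
have [sz Hsz] := choice _ far.
have st : Un_cv (fun N => (sz N).1) t.
  by apply: cv_inv_succ_bound => N; have [[_ ?] _] := Hsz N; lra.
have [phi [zb [phi_incr zzb]]] : exists phi (zb : vec n),
    strict_incr phi /\ vcv (fun k => (sz (phi k)).2) zb.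
  apply: (@bounded_vcv_subseq n (fun N => (sz N).2) r) => N i.
  by have [_ [[[_ zr] _] _]] := Hsz N; apply: Rabs_coord_le_of_sqnorm zr; lra.
have Solzb : Sol (Fxi F (vcomb t xi1 xi0)) (cap_ball K r) zb.
  apply: (Sol_Fxi_closed_graph (xs := fun k => vcomb (sz (phi k)).1 xi1 xi0)) zzb.
  - by move=> z [].
  - exact: cap_ball_seq_closed.
  - by move=> k; have [_ [? _]] := Hsz (phi k).
  - exact/vcv_vcomb/(cv_subseq phi_incr st).
have : r * r <= sqnorm zb.
  apply: (cv_lb (u := fun k => sqnorm (sz (phi k)).2)); last exact: vcv_sqnorm.
  by move=> k; have [_ [_ ?]] := Hsz (phi k).
have := Sol_cap_ball_bounded K_convex (Fxi_seq_continuous _)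
  (Fxi_monotone (ri_simplex_ge0 (ri_simplex_vcomb ri0 ri1 t01))) Mr Solxt SolM Solzb.
by nra.
Qed.

Lemma Sol_Fxi_near_bounded_point xi0 xi1 t M r : ri_simplex xi0 -> ri_simplex xi1 ->
  0 <= t <= 1 -> 0 <= M < r -> (exists x, Sol (Fxi F (vcomb t xi1 xi0)) K x) ->
  (forall z, Sol (Fxi F (vcomb t xi1 xi0)) K z -> sqnorm z <= M * M) ->
  exists d, 0 < d /\ forall s, 0 <= s <= 1 -> Rabs (s - t) < d ->
    exists z, Sol (Fxi F (vcomb s xi1 xi0)) K z /\ sqnorm z <= r * r.
Proof.
move=> ri0 ri1 t01 Mr [xt Solxt] SolM.
have [d [d0 near]] := Sol_cap_ball_near ri0 ri1 t01 Mr (ex_intro _ xt Solxt) SolM.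
exists d; split => // s s01 st.
have xis_ge0 := ri_simplex_ge0 (ri_simplex_vcomb ri0 ri1 s01).
have capK : forall z, cap_ball K r z -> K z by move=> z [].
have [z Solz] : exists z, Sol (Fxi F (vcomb s xi1 xi0)) (cap_ball K r) z.
  apply: (@Sol_exists _ _ _ r).
  - exact: cap_ball_convex.
  - exact: cap_ball_seq_closed.
  - by move=> z [_ zr] i; apply: Rabs_coord_le_of_sqnorm zr; lra.
  - by exists xt; split; [case: Solxt | have := SolM xt Solxt; nra].
  - exact/seq_continuous_on_sub/Fxi_seq_continuous.
  - exact/monotone_on_sub/Fxi_monotone.
have zr := near s s01 st z Solz.
by exists z; split; [exact: Sol_cap_ball_interior Solz zr | lra].
Qed.

(** Components of the proper Pareto solution set *)

Lemma component_meets_near C xi0 xi1 t M : conn_component C (SolPr F K) ->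
  (forall x, C x -> vnorm x <= M) -> ri_simplex xi0 -> ri_simplex xi1 -> 0 <= t <= 1 ->
  (exists x, C x /\ Sol (Fxi F (vcomb t xi1 xi0)) K x) ->
  exists d, 0 < d /\ forall s, 0 <= s <= 1 -> Rabs (s - t) < d ->
    exists x, C x /\ Sol (Fxi F (vcomb s xi1 xi0)) K x.
Proof.
move=> compC CM ri0 ri1 t01 [xt [Cxt Solxt]].
have M0 : 0 <= M by have := CM xt Cxt; have := sqrt_pos (inner xt xt); rewrite /vnorm; lra.
have Sol_t_C := Sol_Fxi_in_component compC (ri_simplex_vcomb ri0 ri1 t01)
  (ex_intro _ xt (conj Cxt Solxt)).
have [d [d0 near]] := Sol_Fxi_near_bounded_point ri0 ri1 t01 (conj M0 (Rlt_plus_1 M))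
  (ex_intro _ xt Solxt) (fun z Solz => vnorm_le_sqnorm (CM z (Sol_t_C z Solz))).
exists d; split => // s s01 st.
pose D := fiber_union (Rmin s t) (Rmax s t) (fun u => Sol (Fxi F (vcomb u xi1 xi0)) K).
have u_near u : Rmin s t <= u <= Rmax s t -> 0 <= u <= 1 /\ Rabs (u - t) < d.
  move: st; rewrite /Rmin /Rmax; case: Rle_dec => ? ? ?; split_Rabs; lra.
have D_conn : connected D.
  apply: (connected_fiber_union (r := M + 1)).
  - by move=> u /u_near [u01 _]; exact/Sol_Fxi_connected/ri_simplex_vcomb.
  - move=> u /u_near [u01 ut]; have [z [Solz zr]] := near u u01 ut.
    by exists z; split => // i; apply: Rabs_coord_le_of_sqnorm zr; lra.
  - move=> us u ws w _ Solws usu wsw.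
    by apply: (Sol_Fxi_closed_graph _ _ Solws (vcv_vcomb xi1 xi0 usu) wsw).
have DC : Defs.subset D C.
  apply: (conn_component_maximal compC _ D_conn).
    by move=> x [u [/u_near [u01 _] Solx]]; exists (vcomb u xi1 xi0); split => //;
      exact: ri_simplex_vcomb.
  by exists xt; split => //; exists t; split => //; split; [apply: Rmin_r | apply: Rmax_r].
have [z [Solz _]] := near s s01 st.
exists z; split => //; apply: DC; exists s; split => //.
by split; [apply: Rmin_l | apply: Rmax_l].
Qed.

Lemma component_meets_seq_closed C xi0 xi1 M : conn_component C (SolPr F K) ->
  (forall x, C x -> vnorm x <= M) -> ri_simplex xi0 -> ri_simplex xi1 ->
  seq_closed_in 0 1 (fun t => exists x, C x /\ Sol (Fxi F (vcomb t xi1 xi0)) K x).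
Proof.
move=> compC CM ri0 ri1 us t us01 meets ust.
have t01 := cv_in_interval us01 ust.
have [xs Hxs] := choice _ meets.
have [phi [x [phi_incr xsx]]] : exists phi x, strict_incr phi /\ vcv (fun k => xs (phi k)) x.
  apply: (bounded_vcv_subseq (M := M)) => k i.
  by apply: Rle_trans (Rabs_coord_le_vnorm _ _) _; apply: CM; case: (Hxs k).
have Solx : Sol (Fxi F (vcomb t xi1 xi0)) K x.
  apply: (Sol_Fxi_closed_graph (xs := fun k => vcomb (us (phi k)) xi1 xi0)) xsx => //.
  - by move=> k; case: (Hxs (phi k)).
  - exact/vcv_vcomb/(cv_subseq phi_incr ust).
exists x; split => //; apply: (conn_component_seq_closed compC _ _ xsx).
  by exists (vcomb t xi1 xi0); split => //; exact: ri_simplex_vcomb.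
by move=> k; case: (Hxs (phi k)).
Qed.

(* Walking along the segment of weights from a solution in [C] to any [y], the set of
   parameters whose solution set meets [C] is closed and open in [0, 1]. *)
Lemma SolPr_sub_bounded_component C M : conn_component C (SolPr F K) ->
  (forall x, C x -> vnorm x <= M) -> forall y, SolPr F K y -> C y.
Proof.
move=> compC CM y [xi1 [ri1 Soly]].
have [[x0 Cx0] [CS _]] := compC; have [xi0 [ri0 Solx0]] := CS x0 Cx0.
pose T t := exists x, C x /\ Sol (Fxi F (vcomb t xi1 xi0)) K x.
have [x [Cx Solx]] : T 1.
  apply: NNPP => notT1.
  apply: (@interval_not_separated 0 1 T (fun t => ~ T t) 0 1) => //; try lra.
  - by exists x0; rewrite vcomb_0.
  - by move=> t _; exact: classic.
  - exact: component_meets_seq_closed compC CM ri0 ri1.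
  move=> us t us01 notT ust Tt.
  have t01 := cv_in_interval us01 ust.
  have [d [d0 near]] := component_meets_near compC CM ri0 ri1 t01 Tt.
  have [N HN] := ust d d0.
  by apply: (notT N); apply: near; [exact: us01 | exact: HN].
rewrite vcomb_1 in Solx.
by apply: (Sol_Fxi_in_component compC ri1) => //; exists x.
Qed.

Lemma SolPr_components_unbounded : ~ connected (SolPr F K) ->
  forall C, conn_component C (SolPr F K) -> ~ vbounded C.
Proof.
move=> not_conn C compC [M CM]; apply: not_conn.
have [_ [CS [C_conn _]]] := compC.
apply: connected_ext C_conn => x; split; first exact: CS.
exact: SolPr_sub_bounded_component compC CM x.
Qed.

Lemma SolPr_bounded_connected : vbounded (SolPr F K) -> nonempty (SolPr F K) ->
  connected (SolPr F K).
Proof.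
move=> [M SM] [x0 Sx0]; apply: NNPP => not_conn.
have compC := component_of_conn_component Sx0.
apply: (SolPr_components_unbounded not_conn compC); exists M => x [D [DS [_ [_ Dx]]]].
exact/SM/DS.
Qed.

End Scalarization.

Theorem theorem4 (n m : nat) (K : vec n -> Prop) (F : 'I_m -> vec n -> vec n)
  (hKne : nonempty K) (hKcl : is_closed K) (hKcv : is_convex K)
  (hFc : forall l, continuous_on K (F l))
  (hmon : monotone_VVI K F) :
  (~ connected (SolPr F K) ->
     forall C, conn_component C (SolPr F K) -> ~ vbounded C) /\
  (vbounded (SolPr F K) -> nonempty (SolPr F K) -> connected (SolPr F K)).
Proof.
have hKscl := closed_seq_closed hKcl.
split.
- exact: SolPr_components_unbounded.
- exact: SolPr_bounded_connected.
Qed.
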